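(* Suppose a first-order method in Algorithm Class 2 is applied to the splitting reformulation (SP) of instance $\mathcal P$ from $x^{(0)}=0$, $y^{(0)}=0$, and generates $\{(x^{(t)},y^{(t)})\}_{t\ge1}$, with $x^{(t)}=(x_1^{(t)\top},\dots,x_m^{(t)\top})^\top$, $x_i^{(t)}\in\mathbb R^{\bar d}$, and $y^{(t)}=(y_1^{(t)\top},\dots,y_{3m_2-1}^{(t)\top})^\top$, $y_j^{(t)}\in\mathbb R^{\bar d}$. Then for any $\bar j\in\{2,3,\dots,\bar d\}$, $\mathrm{supp}(x_i^{(t)})\subset\{1,\dots,\bar j-1\}$ and $\mathrm{supp}(y_j^{(t)})\subset\{1,\dots,\bar j-1\}$ for all $i=1,\dots,m$, $j=1,\dots,3m_2-1$, and all $t\le 1+m(\bar j-2)/3$.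
   Context: $\mathrm{supp}(z)=\{j:[z]_j\ne0\}$. Splitting reformulation (SP) of $\min f_0(x)+\bar g(\bar Ax+\bar b)$ s.t. $Ax+b=0$: $\min_{x,y}f_0(x)+\bar g(y)$ s.t. $Ax+b=0$, $y=\bar Ax+\bar b$. Algorithm Class 2: given $(x^{(0)},y^{(0)})$, for all $t\ge1$, $x^{(t)}\in\mathrm{span}\{x^{(s)},\nabla f_0(x^{(s)}),A^\top b,A^\top Ax^{(s)},\bar A^\top\bar b,\bar A^\top\bar Ax^{(s)},\bar A^\top y^{(s)}\}_{s=0}^{t-1}$ and $y^{(t)}\in\mathrm{span}\{\xi^{(t)},\mathrm{prox}_{\eta_t\bar g}(\xi^{(t)})\}$ with $\eta_t>0$, $\xi^{(t)}\in\mathrm{span}\{\bar b,y^{(s)},\bar A\bar A^\top y^{(s)},\bar Ax^{(s)}\}_{s=0}^{t-1}$, where $\mathrm{prox}_{\eta\bar g}(y)=\arg\min_{y'}\{\bar g(y')+\frac1{2\eta}\|y'-y\|^2\}$. Instance $\mathcal P$: fix $\epsilon\in(0,1)$, $L_f>0$, integers $m_1\ge2$, $m_2\ge1$ with $m_1m_2$ even, $m=3m_1m_2$, an odd integer $\bar d\ge5$, $d=m\bar d$. Write $x=(x_1^\top,\dots,x_m^\top)^\top$, $x_i\in\mathbb R^{\bar d}$; $[z]_j$ is the $j$-th coordinate. $J_p\in\mathbb R^{(p-1)\times p}$ has $-1$ at $(k,k)$, $1$ at $(k,k+1)$, zero elsewhere. $\mathcal M=\{im_1:i=1,\dots,3m_2-1\}$,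 $\mathcal M^C=\{1,\dots,m-1\}\setminus\mathcal M$, $\bar n=(3m_2-1)\bar d$, $\bar A=mL_f(J_{\mathcal M}\otimes I_{\bar d})$, $A=mL_f(J_{\mathcal M^C}\otimes I_{\bar d})$ with $J_{\mathcal M},J_{\mathcal M^C}$ the rows of $J_m$ indexed by $\mathcal M,\mathcal M^C$; $b=0$, $\bar b=0$. Choose $\beta>(50\pi+1+\|A\|)\sqrt m\,\epsilon$; $\bar g(y)=\frac{\beta}{mL_f}\|y\|_1$ on $\mathbb R^{\bar n}$. $\Psi(u)=0$ ($u\le0$), $1-e^{-u^2}$ ($u>0$); $\Phi(v)=4\arctan v+2\pi$. For $z\in\mathbb R^{\bar d}$: $\varphi(z,1)=-\Psi(1)\Phi([z]_1)$, $\varphi(z,j)=\Psi(-[z]_{j-1})\Phi(-[z]_j)-\Psi([z]_{j-1})\Phi([z]_j)$ ($2\le j\le\bar d$); $h_i(z)=\varphi(z,1)+3\sum_{j=1}^{\lfloor\bar d/2\rfloor}\varphi(z,2j)$ for $1\le i\le m/3$, $h_i(z)=\varphi(z,1)$ for $m/3+1\le i\le 2m/3$, $h_i(z)=\varphi(z,1)+3\sum_{j=1}^{\lfloor\bar d/2\rfloor}\varphi(z,2j+1)$ for $2m/3+1\le i\le m$. $f_i(z)=\frac{300\pi\epsilon^2}{mL_f}h_i(\frac{\sqrt mL_fz}{150\pi\epsilon})$, $f_0(x)=\sum_{i=1}^mf_i(x_i)$. Instance $\mathcal P$ is $\min_xf_0(x)+\bar g(\bar Ax)$ s.t. $Ax+b=0$.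 *)

From mathcomp Require Import all_boot all_algebra.
From mathcomp Require Import all_classical all_reals all_analysis.
From mathcomp.real_closed Require Export mxtens.
Import numFieldNormedType.Exports.


Unset Strict Implicit.
Unset Printing Implicit Defensive.

Import GRing.Theory Num.Theory.
Local Open Scope ring_scope.

Section Defs.
Variable R : realType.

Definition sqnorm {n} (v : 'cV[R]_n) : R := \sum_(i < n) (v i 0) ^+ 2.
Definition l2norm {n} (v : 'cV[R]_n) : R := Num.sqrt (sqnorm v).
Definition l1norm {n} (v : 'cV[R]_n) : R := \sum_(i < n) `|v i 0|.
Definition opnorm {p q} (A : 'M[R]_(p, q)) : R :=
  sup [set l2norm (A *m v) | v in [set v : 'cV[R]_q | l2norm v <= 1]].

Definition grad {n} (f : 'cV[R]_n -> R) (x : 'cV[R]_n) : 'cV[R]_n :=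
  \col_(j < n) ('D_(delta_mx j 0) f x : R).

Definition is_prox {n} (g : 'cV[R]_n -> R) (eta : R) (xi p : 'cV[R]_n) : Prop :=
  forall y' : 'cV[R]_n,
    g p + (2 * eta)^-1 * sqnorm (p - xi) <= g y' + (2 * eta)^-1 * sqnorm (y' - xi).

(** Algorithm Class 2 applied to (SP):
    min f0 x + g y  s.t.  A x + b = 0,  y = Ab x + bb. *)
Definition class2 {d nb pa : nat} (f0 : 'cV[R]_d -> R) (g : 'cV[R]_nb -> R)
  (A : 'M[R]_(pa, d)) (b : 'cV[R]_pa) (Ab : 'M[R]_(nb, d)) (bb : 'cV[R]_nb)
  (x : nat -> 'cV[R]_d) (y : nat -> 'cV[R]_nb) : Prop :=
  forall t : nat, (1 <= t)%N ->
    x t \in << flatten [seq [:: x s; grad f0 (x s); A^T *m b; A^T *m A *m x s;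
                              Ab^T *m bb; Ab^T *m Ab *m x s; Ab^T *m y s]
                       | s <- iota 0 t] >>%VS
    /\ exists eta : R, 0 < eta /\
       exists xi : 'cV[R]_nb,
         xi \in << flatten [seq [:: bb; y s; Ab *m Ab^T *m y s; Ab *m x s]
                           | s <- iota 0 t] >>%VS
         /\ exists p : 'cV[R]_nb, is_prox g eta xi p /\ y t \in << [:: xi; p] >>%VS.

Definition mdim (m1 m2 : nat) : nat := (3 * m1 * m2)%N.

Definition Jmat (p : nat) : 'M[R]_(p.-1, p) :=
  \matrix_(k < p.-1, c < p)
    (if (c == k :> nat) then -1 else if (c == k.+1 :> nat) then 1 else 0).

(** Rows of J_p indexed by S (a subset of {1,...,p-1}, stored 0-based),
    in increasing order. *)
Definition Jrows (p : nat) (S : {set 'I_p.-1}) : 'M[R]_(#|S|, p) :=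
  \matrix_(r < #|S|, c < p) Jmat p (enum_val r) c.

(** M = {i m1 : i = 1..3 m2 - 1} as a subset of {1,...,m-1}
    (element k : 'I_(m-1) stands for the index k+1). *)
Definition Mset (m1 m2 : nat) : {set 'I_(mdim m1 m2).-1} :=
  [set k : 'I_(mdim m1 m2).-1 | (m1 %| k.+1)%N].

Definition Abar (Lf : R) (m1 m2 dbar : nat) :
  'M[R]_(#|Mset m1 m2| * dbar, mdim m1 m2 * dbar) :=
  ((mdim m1 m2)%:R * Lf) *: (Jrows (mdim m1 m2) (Mset m1 m2) *t (1%:M : 'M[R]_dbar)).
Definition Amat (Lf : R) (m1 m2 dbar : nat) :
  'M[R]_(#|~: Mset m1 m2| * dbar, mdim m1 m2 * dbar) :=
  ((mdim m1 m2)%:R * Lf) *: (Jrows (mdim m1 m2) (~: Mset m1 m2) *t (1%:M : 'M[R]_dbar)).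

Definition gbar (beta Lf : R) (m1 m2 dbar : nat)
  (y : 'cV[R]_(#|Mset m1 m2| * dbar)) : R :=
  beta / ((mdim m1 m2)%:R * Lf) * l1norm y.

Definition Psi (u : R) : R := if u <= 0 then 0 else 1 - expR (- (u ^+ 2)).
Definition Phi (v : R) : R := 4 * atan v + 2 * pi.

(** 1-based coordinate [z]_j of z in R^n *)
Definition zc {n} (z : 'I_n -> R) (j : nat) : R :=
  if @insub nat (fun k => (k < n)%N) 'I_n j.-1 is Some o then z o else 0.

Definition varphi {n} (z : 'I_n -> R) (j : nat) : R :=
  if j == 1%N then - Psi 1 * Phi (zc z 1)
  else Psi (- zc z j.-1) * Phi (- zc z j) - Psi (zc z j.-1) * Phi (zc z j).

(** h_i, i 1-based in {1,...,m} *)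
Definition hfun (m dbar : nat) (i : nat) (z : 'I_dbar -> R) : R :=
  if (i <= m %/ 3)%N then
    varphi z 1 + 3 * \sum_(1 <= j < (dbar./2).+1) varphi z (2 * j)
  else if (i <= (2 * m) %/ 3)%N then varphi z 1
  else varphi z 1 + 3 * \sum_(1 <= j < (dbar./2).+1) varphi z (2 * j + 1).

Definition ffun (eps Lf : R) (m dbar : nat) (i : nat) (z : 'I_dbar -> R) : R :=
  (300 * pi * eps ^+ 2) / (m%:R * Lf) *
  hfun m dbar i (fun k => (Num.sqrt m%:R * Lf) / (150 * pi * eps) * z k).

(** block x_i (i 0-based) of x = (x_1^T, ..., x_m^T)^T *)
Definition blk {p n} (x : 'cV[R]_(p * n)) (i : 'I_p) : 'I_n -> R :=
  fun k => x (mxtens_index (i, k)) 0.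

Definition f0 (eps Lf : R) (m1 m2 dbar : nat) (x : 'cV[R]_(mdim m1 m2 * dbar)) : R :=
  \sum_(i < mdim m1 m2) ffun eps Lf (mdim m1 m2) dbar i.+1 (blk x i).

End Defs.

Arguments sqnorm {R n}. Arguments l2norm {R n}. Arguments l1norm {R n}.
Arguments opnorm {R p q}. Arguments grad {R n}. Arguments is_prox {R n}.
Arguments class2 {R d nb pa}. Arguments Jmat {R}. Arguments Jrows {R}.
Arguments Abar {R}. Arguments Amat {R}. Arguments gbar {R}.
Arguments Psi {R}. Arguments Phi {R}. Arguments zc {R n}. Arguments varphi {R n}.
Arguments hfun {R}. Arguments ffun {R}. Arguments blk {R p n}. Arguments f0 {R}.

(** For every block [i] and coordinate [k] of the iterates there is a number of
    iterations [horizon q i k] during which that coordinate provably stays 0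
    ([q = m/3]).  Each operation allowed by Algorithm Class 2 moves information
    by at most one step of this profile: the consensus matrices [A], [Abar] only
    mix neighbouring blocks; the prox of a multiple of the l1 norm keeps zero
    coordinates zero; and the gradient of [f_i] can only feed coordinate [k]
    from coordinate [k - 1], and only in the blocks whose [h_i] couples them
    (the first third for even 1-based [k], the last third for odd ones), since
    [Psi] is flat at 0.  A new coordinate therefore has to travel through the
    middle third of the chain, which costs about [q] iterations per coordinate. *)

From mathcomp Require Import all_boot all_order all_algebra.
From mathcomp Require Import all_classical all_reals all_analysis.
From mathcomp.real_closed Require Import mxtens.
From mathcomp Require Import zify ring lra.

Set Implicit Arguments.
Unset Strict Implicit.
Unset Printing Implicit Defensive.

Import Order.TTheory GRing.Theory Num.Theory.
Local Open Scope ring_scope.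

Section Horizon.
Local Open Scope nat_scope.

(** Coordinate [k] (0-based) becomes reachable first in the blocks coupling it
    to [k - 1], and then spreads by one block per iteration; [q + 2] bounds the
    iterations needed to cross from one coupling region to the other. *)
Definition horizon (q i k : nat) : nat :=
  if k is k'.+1 then 1 + k' * (q + 2) + (if odd k then i.+1 - q else 2 * q - i)
  else 0.

Lemma horizon_neighbor q i i' k :
  i' <= i.+1 -> i <= i'.+1 -> horizon q i k <= (horizon q i' k).+1.
Proof. by case: k => [|k] //=; case: (odd k) => /=; lia. Qed.

Lemma horizon_coupled q i k :
  (odd k && (i < q)) || (~~ odd k && (2 * q <= i)) ->
  horizon q i k <= (horizon q i k.-1).+1.
Proof. by case: k => [|[|k]] //=; [lia | rewrite mulSn; case: (odd k) => /=; lia]. Qed.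

Lemma horizon_ge q i k j :
  2 <= j -> j <= k.+1 -> 1 + q * (j - 2) <= horizon q i k.
Proof.
case: k => [|k] /= j2 jk; first lia.
have : q * (j - 2) <= k * (q + 2) by rewrite mulnC leq_mul //; lia.
lia.
Qed.

End Horizon.

Definition dormant {R : pzRingType} {p n : nat} (T : 'I_p -> 'I_n -> nat) (s : nat)
    (v : 'cV[R]_(p * n)) : Prop :=
  forall i k, (s <= T i k)%N -> v (mxtens_index (i, k)) 0 = 0.

Lemma dormant0 {R : pzRingType} p n (T : 'I_p -> 'I_n -> nat) s :
  dormant T s (0 : 'cV[R]_(p * n)).
Proof. by move=> i k _; rewrite mxE. Qed.

Lemma dormantW {R : pzRingType} p n (T : 'I_p -> 'I_n -> nat) s s' (v : 'cV[R]_(p * n)) :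
  (s <= s')%N -> dormant T s v -> dormant T s' v.
Proof. by move=> ss' Hv i k hs; apply: Hv; apply: leq_trans hs. Qed.

Lemma dormant_span {F : fieldType} p n (T : 'I_p -> 'I_n -> nat) s
    (X : seq 'cV[F]_(p * n)) v :
  {in X, forall w, dormant T s w} -> v \in <<X>>%VS -> dormant T s v.
Proof.
move=> HX /(coord_span (X := in_tuple X)) -> i k hs.
rewrite summxE big1 // => j _; rewrite mxE (HX _ _ _ _ hs) ?mulr0 //.
by apply: mem_nth; case: j.
Qed.

Lemma in_flatten_iota {T : eqType} (P : T -> Prop) (F : nat -> seq T) t :
  (forall s, (s < t)%N -> {in F s, forall w, P w}) ->
  {in flatten [seq F s | s <- iota 0 t], forall w, P w}.
Proof.
by move=> HF w /flatten_mapP[s]; rewrite mem_iota => /andP[_ st]; apply: HF.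
Qed.

Lemma dormant_tens1_mul (R : pzRingType) p q n (M : 'M[R]_(p, q)) a d
    (Tin : 'I_q -> 'I_n -> nat) (Tout : 'I_p -> 'I_n -> nat) s v :
  (forall r c k, M r c != 0 -> (Tout r k <= Tin c k + d)%N) ->
  dormant Tin s v -> dormant Tout (s + d) ((a *: (M *t 1%:M)) *m v).
Proof.
move=> HM Hv r k hs; rewrite -scalemxAl mxE [X in _ * X]mxE big1 ?mulr0 // => j _.
case: (mxtens_indexP j) => c k'; rewrite tensmxE [1%:M _ _]mxE.
have [<-|_] := eqVneq k k'; last by rewrite mulr0 mul0r.
have [->|/HM Mrc] := eqVneq (M r c) 0; first by rewrite !mul0r.
by rewrite Hv ?mulr0 // -(leq_add2r d) (leq_trans hs).
Qed.

Lemma dormant_tens1_trmul (R : pzRingType) p q n (M : 'M[R]_(p, q)) a d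
    (Tin : 'I_p -> 'I_n -> nat) (Tout : 'I_q -> 'I_n -> nat) s v :
  (forall r c k, M r c != 0 -> (Tout c k <= Tin r k + d)%N) ->
  dormant Tin s v -> dormant Tout (s + d) ((a *: (M *t 1%:M))^T *m v).
Proof.
move=> HM; rewrite linearZ /= trmx_tens trmx1.
by apply: dormant_tens1_mul => c r k; rewrite mxE; apply: HM.
Qed.

Section DifferenceRows.
Variables (R : realType) (p n : nat) (S : {set 'I_p.-1}) (a : R).
Variable T : nat -> nat -> nat.

Definition edge_profile (r : 'I_#|S|) (k : 'I_n) : nat :=
  minn (T (enum_val r) k) (T (enum_val r).+1 k).

Lemma Jrows_neq0 r c :
  Jrows p S r c != 0 :> R -> c = enum_val r :> nat \/ c = (enum_val r).+1 :> nat.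
Proof.
rewrite !mxE; case: ifP => [/eqP -> _|_]; first by left.
by case: ifP => [/eqP -> _|_]; [right | rewrite eqxx].
Qed.

Lemma dormant_Jrows_mul s (v : 'cV[R]_(p * n)) :
  dormant (fun i k => T i k) s v ->
  dormant edge_profile s ((a *: (Jrows p S *t 1%:M)) *m v).
Proof.
move=> /(@dormant_tens1_mul _ _ _ _ _ a 0 _ edge_profile); rewrite addn0; apply=> r c k.
by rewrite addn0 geq_min => /Jrows_neq0[]->; rewrite leqnn ?orbT.
Qed.

Hypothesis T_neighbor : forall i i' k,
  (i' <= i.+1)%N -> (i <= i'.+1)%N -> (T i k <= (T i' k).+1)%N.

Lemma dormant_Jrows_trmul s (w : 'cV[R]_(#|S| * n)) :
  dormant edge_profile s w ->
  dormant (fun i k => T i k) s.+1 ((a *: (Jrows p S *t 1%:M))^T *m w).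
Proof.
move=> /(@dormant_tens1_trmul _ _ _ _ _ a 1 _ (fun i k => T i k)).
rewrite addn1; apply=> r c k /Jrows_neq0 Erc.
by rewrite addn1 /edge_profile -minnSS leq_min !T_neighbor //; case: Erc => ->; lia.
Qed.

End DifferenceRows.

Arguments edge_profile {p n} S T r k.
Arguments dormant_Jrows_mul {R p n S a T s v}.
Arguments dormant_Jrows_trmul {R p n S a T} T_neighbor {s w}.

Lemma derive_eq0_of_sqr_bound (R : realType) (V : normedModType R) (f : V -> R)
    (x v : V) (K : R) :
  (forall h : R, `|f (h *: v + x) - f x| <= K * h ^+ 2) -> 'D_v f x = 0.
Proof.
move=> Hf; have K0 : 0 <= K by have := Hf 1; rewrite expr1n mulr1; apply: le_trans.
rewrite /derive; apply: (@cvg_lim R^o); first exact: Rhausdorff.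
apply/cvgrPdist_lt => e e0; near=> h.
have h0 : 0 < `|h| by rewrite normr_gt0; near: h; exact: (@nbhs_dnbhs_neq R^o 0).
have hK : `|h| * (K + 1) < e.
  rewrite -ltr_pdivlMr; last lra.
  by near: h; apply: dnbhs0_lt; rewrite divr_gt0 //; lra.
rewrite sub0r normrN /= /shift normrZ normfV ltr_pdivrMl //.
apply: le_lt_trans (Hf h) _; rewrite -(real_normK (num_real h)) expr2; nra.
Unshelve. all: by end_near.
Qed.

Lemma opnorm_ge0 (R : realType) p q (A : 'M[R]_(p, q)) : 0 <= opnorm A.
Proof.
have l2norm0 n : l2norm (0 : 'cV[R]_n) = 0.
  by rewrite /l2norm /sqnorm big1 ?sqrtr0 // => i _; rewrite mxE expr0n.
rewrite /opnorm; set E := (X in sup X).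
have E0 : E 0 by exists 0; rewrite /= ?mulmx0 l2norm0.
have [hs|nhs] := pselect (has_sup E); first exact: (sup_upper_bound hs E0).
by rewrite sup_out.
Qed.

Section ProxL1.
Variables (R : realType) (c eta : R).
Hypotheses (c0 : 0 <= c) (eta0 : 0 < eta).

Lemma prox_l1_coord0 n (xi p : 'cV[R]_n) u :
  is_prox (fun y => c * l1norm y) eta xi p -> xi u 0 = 0 -> p u 0 = 0.
Proof.
move=> Hp xi0; set a := p u 0.
pose p' := p - a *: delta_mx u 0.
have p'E l : p' l 0 = if l == u then 0 else p l 0.
  rewrite !mxE eqxx andbT; case: eqP => [->|_]; last by rewrite mulr0 subr0.
  by rewrite mulr1 subrr.
have l1E : l1norm p = `|a| + l1norm p'.
  rewrite /l1norm (bigD1 u) //= [X in _ = _ + X](bigD1 u) //= p'E eqxx normr0 add0r.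
  by congr (_ + _); apply: eq_bigr => l /negbTE lu; rewrite p'E lu.
have sqE : sqnorm (p - xi) = a ^+ 2 + sqnorm (p' - xi).
  have subE (q : 'cV_n) l : (q - xi) l 0 = q l 0 - xi l 0 by rewrite !mxE.
  rewrite /sqnorm (bigD1 u) //= [X in _ = _ + X](bigD1 u) //= !subE p'E eqxx xi0.
  rewrite subr0 subrr expr0n /= add0r; congr (_ + _).
  by apply: eq_bigr => l /negbTE lu; rewrite !subE p'E lu.
have w0 : 0 < (2 * eta)^-1 by rewrite invr_gt0 mulr_gt0.
have := Hp p'; rewrite /= l1E sqE => Hmin.
have : (2 * eta)^-1 * a ^+ 2 <= 0 by have := mulr_ge0 c0 (normr_ge0 a); lra.
by rewrite pmulr_rle0 // => a2; apply/eqP; rewrite -sqrf_eq0 eq_le a2 sqr_ge0.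
Qed.

Lemma dormant_prox_l1 p' n' (T : 'I_p' -> 'I_n' -> nat) s (xi p : 'cV[R]_(p' * n')) :
  is_prox (fun y => c * l1norm y) eta xi p -> dormant T s xi -> dormant T s p.
Proof. by move=> Hp Hxi i k hs; apply: prox_l1_coord0 Hp (Hxi i k hs). Qed.

End ProxL1.

(** Whether [h_i] couples coordinates [k - 1] and [k] of its argument through
    [varphi _ k]; [i] and [k] are 1-based, as in [hfun]. *)
Definition coupled (m i k : nat) : bool :=
  ((i <= m %/ 3) && ~~ odd k || ~~ (i <= (2 * m) %/ 3) && odd k)%N.

Section Perturbation.
Variable R : realType.

Lemma Psi0 : Psi 0 = 0 :> R.
Proof. by rewrite /Psi lexx. Qed.

Lemma normr_Psi_le (u : R) : `|Psi u| <= u ^+ 2.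
Proof.
rewrite /Psi; case: ifP => _; first by rewrite normr0 sqr_ge0.
have := expR_ge1Dx (- u ^+ 2); have : expR (- u ^+ 2) <= 1.
  by rewrite expR_le1 oppr_le0 sqr_ge0.
by move=> *; rewrite ger0_norm; lra.
Qed.

Lemma normr_Phi_le (v : R) : `|Phi v| <= 4 * pi.
Proof.
have := atan_gtNpi2 v; have := atan_ltpi2 v; have := @pi_gt0 R.
by rewrite /Phi => *; rewrite ger0_norm; lra.
Qed.

Lemma zcS n (w : 'I_n -> R) (l : 'I_n) : zc w l.+1 = w l.
Proof.
rewrite /zc /=; case: insubP => [u _ Eu|]; last by rewrite ltn_ord.
by congr w; apply: val_inj.
Qed.

Lemma zc_scale n (z : 'I_n -> R) (a : R) j : zc (fun l => a * z l) j = a * zc z j.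
Proof. by rewrite /zc; case: insub => [u|]; rewrite ?mulr0. Qed.

Lemma eq_zc_off n (w w' : 'I_n -> R) k : k != 1%N ->
  (forall u : 'I_n, u.+1 != k -> w' u = w u) -> forall l, l != k -> zc w' l = zc w l.
Proof.
move=> k1 Hw l lk; rewrite /zc; case: insubP => [u _ Eu|] //=.
by apply: Hw; rewrite Eu; case: l lk {Eu} => [|l] //= _; rewrite eq_sym.
Qed.

(** Perturbing the zero coordinate [k >= 2] of [w] changes [varphi w j] only for
    [j = k] and [j = k + 1]; the first change vanishes if coordinate [k - 1] is
    zero, and the second is quadratic since [Psi] is flat at [0]. *)
Lemma varphi_perturb n (w w' : 'I_n -> R) k j : (2 <= k)%N ->
  (forall l, l != k -> zc w' l = zc w l) -> zc w k = 0 ->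
  j != k \/ zc w k.-1 = 0 ->
  `|varphi w' j - varphi w j| <= 8 * pi * zc w' k ^+ 2.
Proof.
move=> k2 Hw wk0 Hj.
have k1 : k != 1%N by case: k k2 {Hw wk0 Hj} => [|[|]].
have B0 : 0 <= 8 * pi * zc w' k ^+ 2 by rewrite mulr_ge0 ?sqr_ge0 // mulr_ge0 // pi_ge0.
have [jk|jk] := eqVneq j k; first subst j.
  have wk1 : zc w k.-1 = 0 by case: Hj; rewrite ?eqxx.
  have Pk : k.-1 != k by apply/eqP; lia.
  by rewrite /varphi (negbTE k1) (Hw _ Pk) wk1 oppr0 Psi0 !mul0r subrr normr0.
have [-> {j jk Hj}|jk1] := eqVneq j k.+1.
  have [Sk1 Sk] : (k.+1 == 1%N) = false /\ k.+1 != k by split; apply/eqP; lia.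
  rewrite /varphi Sk1 (Hw _ Sk) ?wk0 ?oppr0 ?Psi0 ?mul0r ?subrr ?subr0.
  set d := zc w' k; set b := zc w k.+1.
  apply: le_trans (ler_normB _ _) _; rewrite !normrM.
  have := normr_Psi_le (- d); have := normr_Psi_le d; rewrite sqrrN.
  have := normr_Phi_le (- b); have := normr_Phi_le b.
  have := normr_ge0 (Psi (- d)); have := normr_ge0 (Psi d).
  have := normr_ge0 (Phi (- b)); have := normr_ge0 (Phi b).
  by move=> *; nra.
have [/eqP jk' /eqP jk1'] := (jk, jk1).
rewrite /varphi (Hw j) // (Hw j.-1) ?(Hw 1%N) ?subrr ?normr0 //.
  by rewrite eq_sym.
by apply/eqP; lia.
Qed.

Lemma sum_varphi_perturb n (w w' : 'I_n -> R) k (F : nat -> nat) N : (2 <= k)%N ->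
  (forall l, l != k -> zc w' l = zc w l) -> zc w k = 0 ->
  (forall j, F j != k \/ zc w k.-1 = 0) ->
  `|\sum_(1 <= j < N.+1) varphi w' (F j) - \sum_(1 <= j < N.+1) varphi w (F j)|
    <= N%:R * (8 * pi * zc w' k ^+ 2).
Proof.
move=> k2 Hw wk0 HF; rewrite -sumrB; apply: le_trans (ler_norm_sum _ _ _) _.
apply: le_trans (_ : _ <= \sum_(1 <= j < N.+1) (8 * pi * zc w' k ^+ 2)) _.
  by apply: ler_sum => j _; apply: varphi_perturb.
by rewrite sumr_const_nat subn1 [X in _ <= X]mulr_natl.
Qed.

Lemma hfun_perturb m dbar i k (w w' : 'I_dbar -> R) : (2 <= k)%N ->
  (forall l, l != k -> zc w' l = zc w l) -> zc w k = 0 ->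
  (coupled m i k -> zc w k.-1 = 0) ->
  `|hfun m dbar i w' - hfun m dbar i w| <= (1 + 3 * dbar%:R) * (8 * pi * zc w' k ^+ 2).
Proof.
move=> k2 Hw wk0 Hc; set B := 8 * pi * zc w' k ^+ 2.
have B0 : 0 <= B by rewrite mulr_ge0 ?sqr_ge0 // mulr_ge0 // pi_ge0.
have Hfirst : `|varphi w' 1 - varphi w 1| <= B.
  by apply: varphi_perturb => //; left; apply/eqP; lia.
have Hcomb (a c b d : R) : `|b - d| <= dbar%:R * B ->
    `|(a + 3 * b) - (c + 3 * d)| <= `|a - c| + 3 * (dbar%:R * B).
  move=> Hbd; rewrite (_ : _ - _ = (a - c) + 3 * (b - d)); last by ring.
  by apply: le_trans (ler_normD _ _) _; rewrite lerD2l normrM gtr0_norm // ler_pM2l.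
have Hsum F : (forall j, F j != k \/ zc w k.-1 = 0) ->
    `|(varphi w' 1 + 3 * \sum_(1 <= j < (dbar./2).+1) varphi w' (F j)) -
      (varphi w 1 + 3 * \sum_(1 <= j < (dbar./2).+1) varphi w (F j))|
    <= (1 + 3 * dbar%:R) * B.
  move=> HF; apply: le_trans (Hcomb _ _ _ _ _) _.
    apply: le_trans (@sum_varphi_perturb _ w w' k F (dbar./2) k2 Hw wk0 HF) _.
    by rewrite ler_wpM2r // ler_nat; lia.
  by rewrite (_ : (1 + 3 * dbar%:R) * B = B + 3 * (dbar%:R * B)) ?lerD2r //; ring.
rewrite /hfun; case: ifP => Hi1; [|case: ifP => Hi2].
- apply: Hsum => j; case: (boolP (odd k)) => ok.
    by left; apply/eqP => e; move: ok; rewrite -e oddM.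
  by right; apply: Hc; rewrite /coupled Hi1 ok.
- by apply: le_trans Hfirst _; rewrite ler_peMl // lerDl mulr_ge0.
- apply: Hsum => j; case: (boolP (odd k)) => ok.
    by right; apply: Hc; rewrite /coupled Hi2 ok orbT.
  by left; apply/eqP => e; move: ok; rewrite -e oddD oddM.
Qed.

End Perturbation.

Lemma coupled_3mul q i k :
  coupled (3 * q) i.+1 k.+1 = (odd k && (i < q) || ~~ odd k && (2 * q <= i))%N.
Proof. rewrite /coupled /=; case: (odd k) => /=; lia. Qed.

Section GradientF0.
Variables (R : realType) (eps Lf : R) (m1 m2 dbar : nat).
Local Notation m := (mdim m1 m2).
Local Notation f := (f0 eps Lf m1 m2 dbar).

Lemma blk_add_delta (x : 'cV[R]_(m * dbar)) i k (h : R) i' k' :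
  blk (h *: delta_mx (mxtens_index (i, k)) 0 + x) i' k' =
  (if (i' == i) && (k' == k) then h else 0) + blk x i' k'.
Proof.
rewrite /blk !mxE eqxx andbT (inj_eq (can_inj (@mxtens_indexK _ _))) xpair_eqE.
by case: ifP; rewrite ?mulr1 ?mulr0.
Qed.

Lemma f0_add_delta (x : 'cV[R]_(m * dbar)) i k (h : R) :
  let scale z l := Num.sqrt m%:R * Lf / (150 * pi * eps) * z l in
  f (h *: delta_mx (mxtens_index (i, k)) 0 + x) - f x =
  300 * pi * eps ^+ 2 / (m%:R * Lf) *
  (hfun m dbar i.+1 (scale (blk (h *: delta_mx (mxtens_index (i, k)) 0 + x) i))
   - hfun m dbar i.+1 (scale (blk x i))).
Proof.
rewrite /f0 -sumrB (bigD1 i) //= big1 ?addr0 => [|i' /negbTE i'i]; first by rewrite -mulrBr.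
suff -> : blk (h *: delta_mx (mxtens_index (i, k)) 0 + x) i' = blk x i' by rewrite subrr.
by apply/funext => k'; rewrite blk_add_delta i'i add0r.
Qed.

Lemma grad_f0_coord0 (x : 'cV[R]_(m * dbar)) (i : 'I_m) (k : 'I_dbar) :
  (0 < k)%N -> blk x i k = 0 -> (coupled m i.+1 k.+1 -> zc (blk x i) k = 0) ->
  grad f x (mxtens_index (i, k)) 0 = 0.
Proof.
move=> k0 xk0 Hc; set C := 300 * pi * eps ^+ 2 / (m%:R * Lf).
set a := Num.sqrt m%:R * Lf / (150 * pi * eps).
rewrite /grad mxE; apply: (@derive_eq0_of_sqr_bound _ _ _ _ _
  (`|C| * ((1 + 3 * dbar%:R) * (8 * pi * a ^+ 2)))) => h.
rewrite f0_add_delta normrM.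
rewrite (_ : _ * h ^+ 2 =
  `|C| * ((1 + 3 * dbar%:R) * (8 * pi * (a * h) ^+ 2))); last by ring.
apply: ler_wpM2l => //.
set w := fun l => a * blk x i l.
set w' := fun l => a * blk (h *: delta_mx (mxtens_index (i, k)) 0 + x) i l.
have w'k : zc w' k.+1 = a * h by rewrite zcS /w' blk_add_delta !eqxx xk0 addr0.
rewrite -w'k; apply: hfun_perturb.
- by [].
- apply: eq_zc_off; first by rewrite eqSS -lt0n.
  move=> u uk; rewrite /w' /w blk_add_delta eqxx /=.
  by case: (eqVneq u k) uk => [->|_]; rewrite ?eqxx ?add0r.
- by rewrite zcS /w xk0 mulr0.
- by move=> /Hc; rewrite /w zc_scale => ->; rewrite mulr0.
Qed.

Lemma dormant_grad_f0 s (x : 'cV[R]_(m * dbar)) :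
  dormant (fun i k => horizon (m1 * m2) i k) s x ->
  dormant (fun i k => horizon (m1 * m2) i k) s.+1 (grad f x).
Proof.
move=> Hx i k hs; have k0 : (0 < k)%N by case: (nat_of_ord k) hs.
apply: grad_f0_coord0 => //; first by apply: Hx; apply: ltnW.
have k1 : (k.-1 < dbar)%N by rewrite prednK // ltnW.
have -> : zc (blk x i) k = blk x i (Ordinal k1) by rewrite -zcS /= prednK.
have -> : coupled m i.+1 k.+1 = coupled (3 * (m1 * m2)) i.+1 k.+1 by rewrite mulnA.
rewrite coupled_3mul => /horizon_coupled Hc; apply: Hx => /=; lia.
Qed.

End GradientF0.

Section Class2Dormancy.
Variables (R : realType) (p pb pa n : nat).
Variables (f : 'cV[R]_(p * n) -> R) (g : 'cV[R]_(pb * n) -> R).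
Variables (A : 'M[R]_(pa, p * n)) (Ab : 'M[R]_(pb * n, p * n)).
Variables (Tx : 'I_p -> 'I_n -> nat) (Ty : 'I_pb -> 'I_n -> nat).

Hypothesis grad_dormant : forall s v, dormant Tx s v -> dormant Tx s.+1 (grad f v).
Hypothesis AtA_dormant : forall s v, dormant Tx s v -> dormant Tx s.+1 (A^T *m A *m v).
Hypothesis Ab_dormant : forall s v, dormant Tx s v -> dormant Ty s (Ab *m v).
Hypothesis Abt_dormant : forall s w, dormant Ty s w -> dormant Tx s.+1 (Ab^T *m w).
Hypothesis prox_dormant : forall s eta xi z,
  0 < eta -> is_prox g eta xi z -> dormant Ty s xi -> dormant Ty s z.

Lemma class2_dormant x y : x 0%N = 0 -> y 0%N = 0 -> class2 f g A 0 Ab 0 x y ->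
  forall s, dormant Tx s (x s) /\ dormant Ty s (y s).
Proof.
move=> x0 y0 Hcl; elim/ltn_ind => -[|s] IH; first by rewrite x0 y0; split; apply: dormant0.
have IHx s' : (s' < s.+1)%N -> dormant Tx s' (x s') by move=> /IH[].
have IHy s' : (s' < s.+1)%N -> dormant Ty s' (y s') by move=> /IH[].
have [Hx [eta [eta0 [xi [Hxi [z [Hz Hy]]]]]]] := Hcl s.+1 isT.
have Hxi' : dormant Ty s.+1 xi.
  apply: dormant_span Hxi; apply: in_flatten_iota => s' lt_s' w.
  rewrite !inE; repeat case/orP => [/eqP->|]; last move/eqP->.
  - exact: dormant0.
  - exact: dormantW (ltnW lt_s') (IHy _ lt_s').
  - by rewrite -mulmxA; apply: dormantW lt_s' (Ab_dormant (Abt_dormant (IHy _ lt_s'))).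
  - exact: dormantW (ltnW lt_s') (Ab_dormant (IHx _ lt_s')).
split.
  apply: dormant_span Hx; apply: in_flatten_iota => s' lt_s' w.
  rewrite !inE; repeat case/orP => [/eqP->|]; last move/eqP->.
  - exact: dormantW (ltnW lt_s') (IHx _ lt_s').
  - exact: dormantW lt_s' (grad_dormant (IHx _ lt_s')).
  - by rewrite mulmx0; apply: dormant0.
  - exact: dormantW lt_s' (AtA_dormant (IHx _ lt_s')).
  - by rewrite mulmx0; apply: dormant0.
  - by rewrite -mulmxA; apply: dormantW lt_s' (Abt_dormant (Ab_dormant (IHx _ lt_s'))).
  - exact: dormantW lt_s' (Abt_dormant (IHy _ lt_s')).
apply: dormant_span Hy => w; rewrite !inE => /orP[|] /eqP-> //.
exact: prox_dormant eta0 Hz Hxi'.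
Qed.

End Class2Dormancy.

Theorem proposition4 (R : realType) (eps Lf beta : R) (m1 m2 dbar : nat) :
  0 < eps < 1 -> 0 < Lf ->
  (2 <= m1)%N -> (1 <= m2)%N -> ~~ odd (m1 * m2) ->
  odd dbar -> (5 <= dbar)%N ->
  (50 * pi + 1 + opnorm (Amat Lf m1 m2 dbar)) * Num.sqrt (mdim m1 m2)%:R * eps < beta ->
  forall (x : nat -> 'cV[R]_(mdim m1 m2 * dbar))
         (y : nat -> 'cV[R]_(#|Mset m1 m2| * dbar)),
  x 0%N = 0 -> y 0%N = 0 ->
  class2 (f0 eps Lf m1 m2 dbar) (gbar beta Lf m1 m2 dbar)
         (Amat Lf m1 m2 dbar) 0 (Abar Lf m1 m2 dbar) 0 x y ->
  forall jbar : nat, (2 <= jbar <= dbar)%N ->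
  forall t : nat, (3 * t <= 3 + mdim m1 m2 * (jbar - 2))%N ->
    (forall (i : 'I_(mdim m1 m2)) (k : 'I_dbar),
        (jbar <= k.+1)%N -> blk (x t) i k = 0) /\
    (forall (j : 'I_#|Mset m1 m2|) (k : 'I_dbar),
        (jbar <= k.+1)%N -> blk (y t) j k = 0).
Proof.
move=> /andP[eps0 _] Lf0 _ _ _ _ _ Hbeta x y x0 y0 Hcl jbar /andP[j2 _] t Ht.
set q := (m1 * m2)%N.
have gbar_weight_ge0 : 0 <= beta / ((mdim m1 m2)%:R * Lf).
  rewrite divr_ge0 ?mulr_ge0 ?ler0n ?(ltW Lf0) // (le_trans _ (ltW Hbeta)) //.
  rewrite !mulr_ge0 ?sqrtr_ge0 ?(ltW eps0) //.
  by have := opnorm_ge0 (Amat Lf m1 m2 dbar); have := @pi_ge0 R; lra.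
have [Hx Hy] : dormant (fun i k => horizon q i k) t (x t) /\
               dormant (edge_profile (Mset m1 m2) (horizon q)) t (y t).
  have horizon_nb := @horizon_neighbor q.
  apply: (class2_dormant _ _ _ _ _ x0 y0 Hcl t) => [s v|s v Hv|s v|s w|s eta xi z eta0].
  - exact: dormant_grad_f0.
  - rewrite /Amat -mulmxA; apply: (dormant_Jrows_trmul horizon_nb).
    exact: dormant_Jrows_mul.
  - exact: dormant_Jrows_mul.
  - exact: (dormant_Jrows_trmul horizon_nb).
  - by rewrite /gbar => /(dormant_prox_l1 gbar_weight_ge0 eta0); apply.
have t_le k : (jbar <= k.+1)%N -> forall i, (t <= horizon q i k)%N.
  move=> jk i; have := horizon_ge q i j2 jk.
  by move: Ht; rewrite /mdim -mulnA -/q -mulnA; lia.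
split=> i k /t_le t_le_k; first exact: Hx.
by apply: Hy; rewrite /edge_profile leq_min !t_le_k.
Qed.
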